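(* Let $F$ be a field, $A$ a set, and $E$ a thin set of functions $A\to F$. Then the thinly independent subsets of $E$ form the independent sets of a matroid on $E$.
   Context: A set $X$ of functions $A\to F$ is thin if for every $a\in A$ only finitely many $x\in X$ satisfy $x(a)\neq 0$; for thin $X$ and coefficients $\alpha_x\in F$, $\sum_{x\in X}\alpha_x x$ denotes the pointwise sum (well defined by thinness). A set of functions $A\to F$ is thinly independent if for every thin subset $X$ and every family $(\alpha_x)_{x\in X}$ of elements of $F$, $\sum_{x\in X}\alpha_x x=\mathbf 0$ implies $\alpha_x=0$ for all $x\in X$. Matroids may be infinite: a matroid on $E$ is a family $\mathcal I\subseteq 2^E$ (the independent sets) with (I1) $\emptyset\in\mathcal I$; (I2) $\mathcal I$ closed under subsets; (I3) for every non-maximal $I\in\mathcal I$ and maximal $I'\in\mathcal I$ there is $x\in I'\setminus I$ with $I\cup\{x\}\in\mathcal I$; (IM) whenever $I\subseteq X\subseteq E$ and $I\in\mathcal I$, the set $\{I'\in\mathcal I:I\subseteq I'\subseteq X\}$ has a maximal element. *)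

From HB Require Import structures.
From mathcomp Require Import all_boot all_order all_algebra.
From mathcomp Require Import boolp classical_sets functions cardinality fsbigop.
Set Implicit Arguments. Unset Strict Implicit. Unset Printing Implicit Defensive.
Import GRing.Theory.
Local Open Scope classical_set_scope.
Local Open Scope ring_scope.

Definition thin (F : fieldType) (A : Type) (X : set (A -> F)) : Prop :=
  forall a : A, finite_set [set x | X x /\ x a != 0].

Definition thin_sum (F : fieldType) (A : Type) (X : set (A -> F))
  (alpha : (A -> F) -> F) : A -> F :=
  fun a => \sum_(x \in [set x | X x /\ x a != 0]) (alpha x * x a).

Definition thinly_independent (F : fieldType) (A : Type) (S : set (A -> F)) : Prop :=
  forall (X : set (A -> F)) (alpha : (A -> F) -> F),
    X `<=` S -> thin X ->
    thin_sum X alpha = (fun _ => 0) ->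
    forall x, X x -> alpha x = 0.

Definition maximal_in (T : Type) (Fam : set (set T)) (M : set T) : Prop :=
  Fam M /\ forall N, Fam N -> M `<=` N -> N = M.

Definition matroid (T : Type) (E : set T) (I : set (set T)) : Prop :=
  [/\ (forall J, I J -> J `<=` E),
      I set0,
      (forall J J', I J -> J' `<=` J -> I J'),
      (forall J J', I J -> ~ maximal_in I J -> maximal_in I J' ->
         exists2 x, (J' `\` J) x & I (J `|` [set x])) &
      (forall J X, J `<=` X -> X `<=` E -> I J ->
         exists M, maximal_in [set J' | I J' /\ J `<=` J' /\ J' `<=` X] M)].

From mathcomp Require Import all_boot all_algebra.
From mathcomp Require Import boolp classical_sets cardinality fsbigop.

(* Independence is tested against finitary functionals [s], finite linear
   combinations of point evaluations [x |-> x a].  Thinness makes the pairing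
   [\sum_x al x * s x] of a coefficient family [al] with [s] a finite sum equal to
   the combination of the thin sums of [al] at the points of [s], so every thin
   relation is annihilated by every [s].  Conversely, Zorn's lemma applied to
   relations "modulo the functionals vanishing off D" shows that each point [e]
   of an independent set [S] is separated: some [s] is [1] at [e] and [0] on
   [S \ {e}].  Given this duality, (IM) comes from a maximal [T] inside [X \ J]
   whose complement still spans [X] for functionals (Zorn again), [X \ T] being
   the required maximal independent set; and (I3) from a functional separating a
   new point [y] from [J]: it vanishes on the span of [J], so it kills every
   coefficient but that of [y] in a relation of [J' + y], which is then trivial. *)

Set Implicit Arguments. Unset Strict Implicit. Unset Printing Implicit Defensive.
Import GRing.Theory.
Local Open Scope classical_set_scope.
Local Open Scope ring_scope.

Lemma chain_finite_subset (I : Type) (T : eqType) (C : set I) (R : I -> I -> Prop)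
    (dom : I -> set T) (i0 : I) :
  C i0 -> (forall i j, R i j -> dom i `<=` dom j) -> total_on C R ->
  forall K, finite_set K -> K `<=` \bigcup_(i in C) dom i ->
  exists2 i, C i & K `<=` dom i.
Proof.
move=> Ci0 mono tot K /finite_seqP[l ->] {K}.
elim: l => [|y l IH] lC.
  by exists i0 => // y /=; rewrite in_nil.
have [k Ck lk] : exists2 k, C k & [set` l] `<=` dom k.
  by apply: IH => z lz; apply: lC; rewrite /= inE lz orbT.
have [i Ci iy] := lC y (mem_head _ _).
have yl z : [set` y :: l] z -> z = y \/ [set` l] z by rewrite /= inE => /orP[/eqP|]; auto.
have [/mono ik|/mono ki] := tot i k Ci Ck.
  by exists k => // z /yl[->|/lk//]; exact: ik.
by exists i => // z /yl[->//|/lk/ki].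
Qed.

Lemma fsbig_supp1 (T : choiceType) (R : zmodType) (P : set T) (f : T -> R) e :
  (forall x, P x -> x != e -> f x = 0) -> (~ P e -> f e = 0) ->
  \sum_(x \in P) f x = f e.
Proof.
move=> f0 fe; have [Pe|nPe] := pselect (P e); last first.
  by rewrite fsbig1 ?fe // => x Px; apply: f0 => //; apply: contra_notN nPe => /eqP <-.
rewrite -(fsbig_widen [set e] P f) ?fsbig_set1 //; first by move=> x ->.
by move=> x [Px /eqP xe]; exact: f0.
Qed.

Lemma not_maximal_inP (T : Type) (Fam : set (set T)) M :
  Fam M -> ~ maximal_in Fam M -> exists N y, [/\ Fam N, M `<=` N, N y & ~ M y].
Proof.
move=> FM /not_andP[//|/existsNP[N /not_implyP[FN /not_implyP[MN NM]]]].
have /existsNP[y /not_implyP[Ny nMy]] : ~ N `<=` M.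
  by move=> NM'; apply: NM; apply/seteqP.
by exists N, y.
Qed.

Section ThinSums.
Variables (F : fieldType) (A : Type) (E : set (A -> F)).
Hypothesis thinE : thin E.

Definition feval (s : seq (A * F)) (x : A -> F) : F := \sum_(p <- s) p.2 * x p.1.

Definition fscale (c : F) (s : seq (A * F)) := [seq (p.1, c * p.2) | p <- s].

Definition fsupp (s : seq (A * F)) := [set x | E x /\ feval s x != 0].

Definition tsum (al : (A -> F) -> F) (a : A) : F :=
  \sum_(x \in [set x | E x /\ x a != 0]) al x * x a.

Definition dual_pair (al : (A -> F) -> F) (s : seq (A * F)) : F :=
  \sum_(x \in fsupp s) al x * feval s x.

Lemma feval_cat s1 s2 x : feval (s1 ++ s2) x = feval s1 x + feval s2 x.
Proof. by rewrite /feval big_cat. Qed.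

Lemma feval_scale c s x : feval (fscale c s) x = c * feval s x.
Proof. by rewrite /feval big_map mulr_sumr; apply: eq_bigr => p _; rewrite mulrA. Qed.

Lemma finite_fsupp s : finite_set (fsupp s).
Proof.
elim: s => [|p s IH].
  apply: (@sub_finite_set _ _ set0) => // x [_].
  by rewrite /feval big_nil eqxx.
apply: (sub_finite_set (B := [set x | E x /\ x p.1 != 0] `|` fsupp s)).
  move=> x [Ex]; rewrite /feval big_cons.
  have [xp|] := eqVneq (x p.1) 0; last by left.
  by rewrite xp mulr0 add0r; right.
by rewrite finite_setU; split => //; apply: (sub_finite_set _ (thinE p.1)) => x [].
Qed.

Lemma feval_out_fsupp s x : E x -> ~ fsupp s x -> feval s x = 0.
Proof. by move=> Ex nS; apply/eqP; apply: contra_notT nS => ?; split. Qed.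

Lemma dual_pair_cat al s1 s2 :
  dual_pair al (s1 ++ s2) = dual_pair al s1 + dual_pair al s2.
Proof.
pose D := fsupp s1 `|` fsupp s2.
have Dfin : finite_set D by rewrite finite_setU; split; apply: finite_fsupp.
have widen s : fsupp s `<=` D ->
    dual_pair al s = \sum_(x \in D) al x * feval s x.
  move=> sD; apply: fsbig_widen => // x [Dx /= nS].
  by rewrite feval_out_fsupp ?mulr0 //; case: Dx => -[].
rewrite !widen; [|by move=> x; right|by move=> x; left|].
  by rewrite -fsbig_split //; apply: eq_fsbigr => x _; rewrite feval_cat mulrDr.
move=> x [Ex]; rewrite feval_cat; have [s1x|] := eqVneq (feval s1 x) 0.
  by rewrite s1x add0r; right.
by left.
Qed.

Lemma dual_pairE al s : dual_pair al s = \sum_(p <- s) p.2 * tsum al p.1.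
Proof.
elim: s => [|p s IH].
  by rewrite big_nil /dual_pair fsbig1 // => x _; rewrite /feval big_nil mulr0.
rewrite -cat1s dual_pair_cat IH big_cons; congr (_ + _).
have ev x : feval [:: p] x = p.2 * x p.1 by rewrite /feval big_seq1.
have [p0|p0] := eqVneq p.2 0.
  by rewrite p0 mul0r /dual_pair fsbig1 // => x _; rewrite ev p0 mul0r mulr0.
rewrite /dual_pair (_ : fsupp _ = [set x | E x /\ x p.1 != 0]).
  by rewrite /tsum mulr_fsumr; apply: eq_fsbigr => x _; rewrite ev mulrCA.
apply/seteqP; split => x [Ex] /=.
  by rewrite ev mulf_eq0 negb_or p0.
by move=> xp; split => //; rewrite ev mulf_neq0.
Qed.

Lemma dual_pair_scale al c s : dual_pair al (fscale c s) = c * dual_pair al s.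
Proof.
by rewrite !dual_pairE big_map mulr_sumr; apply: eq_bigr => p _; rewrite mulrA.
Qed.

Lemma dual_pair_eq0 al s : (forall a, tsum al a = 0) -> dual_pair al s = 0.
Proof. by move=> al0; rewrite dual_pairE big1 // => p _; rewrite al0 mulr0. Qed.

Lemma dual_pair_supp1 al s e : E e ->
  (forall x, E x -> x != e -> al x * feval s x = 0) ->
  dual_pair al s = al e * feval s e.
Proof.
move=> Ee H; apply: fsbig_supp1 => [x [Ex _]|nS]; first exact: H.
by rewrite feval_out_fsupp // mulr0.
Qed.

Lemma dual_pair_delta al c x0 s : E x0 ->
  dual_pair (fun x => al x + (if x == x0 then c else 0)) s =
  dual_pair al s + c * feval s x0.
Proof.
move=> Ex0; rewrite !dual_pairE /feval mulr_sumr -big_split.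
apply: eq_bigr => p _ /=; rewrite mulrCA -mulrDr; congr (_ * _).
rewrite /tsum; under eq_fsbigr do rewrite mulrDl.
rewrite fsbig_split //; congr (_ + _).
rewrite (fsbig_supp1 (e := x0)) ?eqxx // => [x _ /negbTE->|]; first by rewrite mul0r.
by move=> nx0; rewrite (_ : x0 p.1 = 0) ?mulr0 //; apply/eqP; apply: contra_notT nx0.
Qed.

Definition independent (S : set (A -> F)) := forall al : (A -> F) -> F,
  (forall x, al x != 0 -> S x) -> (forall a, tsum al a = 0) -> forall x, al x = 0.

Lemma thin_sumE X al : X `<=` E ->
  thin_sum X al = tsum (fun x => if x \in X then al x else 0).
Proof.
move=> XE; apply: funext => a; rewrite /thin_sum /tsum.
rewrite (eq_fsbigr (fun x => (if x \in X then al x else 0) * x a)); last first.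
  by move=> x /set_mem[Xx _]; rewrite mem_set.
apply: fsbig_widen => [x [Xx xa]|x [[_ xa] /= nX]]; first by split => //; exact: XE.
by rewrite ifF ?mul0r //; apply/negP => /set_mem Xx; exact: nX.
Qed.

Lemma thinly_independentE S : S `<=` E -> thinly_independent S <-> independent S.
Proof.
move=> SE; split => [indS al alS al0 x|indS X al XS _ al0 x Xx].
  have [//|alx] := eqVneq (al x) 0; apply: (indS S al) => //; last exact: alS.
  - by move=> a; apply: sub_finite_set (thinE a) => y [/SE].
  rewrite thin_sumE // (_ : (fun x => _) = al); first exact: funext.
  apply: funext => y; case: ifPn => // /negP yS.
  by apply/esym/eqP; apply: contra_notT yS => /alS /mem_set.
have := indS (fun x => if x \in X then al x else 0) _ _ x.
  rewrite (mem_set Xx); apply => [y|a].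
  by case: ifPn => [/set_mem/XS|]; rewrite ?eqxx.
by rewrite -thin_sumE ?al0 //; exact: subset_trans XS SE.
Qed.

Lemma independent_sub S S' : independent S -> S' `<=` S -> independent S'.
Proof. by move=> indS S'S al /(_ _ _)/S'S; apply: indS. Qed.

Lemma independent0 : independent set0.
Proof. by move=> al al0 _ x; apply/eqP; apply: contra_notT (al0 x). Qed.

Lemma not_independentP S : ~ independent S ->
  exists al, [/\ forall x, al x != 0 -> S x, forall a, tsum al a = 0 &
                 exists x, al x != 0].
Proof.
move=> /existsNP[al /not_implyP[alS /not_implyP[al0 /existsNP[x /eqP alx]]]].
by exists al; split => //; exists x.
Qed.

Definition separated (S : set (A -> F)) (e : A -> F) := exists s,
  feval s e = 1 /\ forall x, S x -> x != e -> feval s x = 0.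

Lemma separated_scale S e s : feval s e != 0 ->
  (forall x, S x -> x != e -> feval s x = 0) -> separated S e.
Proof.
move=> se s0; exists (fscale (feval s e)^-1 s); rewrite feval_scale mulVf //.
by split => [//|x Sx xe]; rewrite feval_scale (s0 x) ?mulr0.
Qed.

Lemma independent_of_separated S : S `<=` E ->
  (forall e, S e -> separated S e) -> independent S.
Proof.
move=> SE sepS al alS al0 x; have [//|alx] := eqVneq (al x) 0.
have [s [sx s0]] := sepS x (alS x alx).
have := dual_pair_eq0 s al0; rewrite (dual_pair_supp1 (SE _ (alS x alx))).
  by rewrite sx mulr1.
move=> y Ey yx; have [->|/alS Sy] := eqVneq (al y) 0; first by rewrite mul0r.
by rewrite (s0 y) ?mulr0.
Qed.

Lemma feval_dependent_eq0 J x s : E x -> independent J ->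
  ~ independent (J `|` [set x]) -> (forall y, J y -> feval s y = 0) ->
  feval s x = 0.
Proof.
move=> Ex indJ /not_independentP[al [alJx al0 [z alz]]] sJ.
have alx : al x != 0.
  apply: contra_neq alz => alx0; apply: indJ al0 z => y aly.
  by case: (alJx y aly) => // /= yx; rewrite yx alx0 eqxx in aly.
have := dual_pair_eq0 s al0; rewrite (dual_pair_supp1 Ex).
  by move/eqP; rewrite mulf_eq0 (negbTE alx) => /eqP.
move=> y Ey yx; have [->|/alJx[/sJ->|/= yx']] := eqVneq (al y) 0.
- by rewrite mul0r.
- by rewrite mulr0.
- by rewrite yx' eqxx in yx.
Qed.

Section Separation.
Variables (S : set (A -> F)) (e : A -> F).
Hypotheses (SE : S `<=` E) (Se : S e).

Definition vanishes_off (D : set (A -> F)) (s : seq (A * F)) :=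
  forall x, S x -> ~ D x -> feval s x = 0.

(* A linear relation of [S] normalized at [e], but only "modulo the functionals
   vanishing off [D]"; for [D = S] it is a genuine relation. *)
Definition relation_on (D : set (A -> F)) (al : (A -> F) -> F) :=
  [/\ D `<=` S, D e, al e = 1, forall x, al x != 0 -> D x &
      forall s, vanishes_off D s -> dual_pair al s = 0].

Definition extends (p q : set (A -> F) * ((A -> F) -> F)) :=
  p.1 `<=` q.1 /\ forall x, p.1 x -> p.2 x = q.2 x.

Lemma relation_on_delta : ~ separated S e ->
  relation_on [set e] (fun x => if x == e then 1 else 0).
Proof.
move=> nsep; split => //=; [by move=> x ->|by rewrite eqxx| |].
  by move=> x; case: (eqVneq x e) => // _; rewrite eqxx.
move=> s s0; rewrite (dual_pair_supp1 (SE Se)); last first.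
  by move=> x _ /negbTE->; rewrite mul0r.
rewrite eqxx mul1r; apply/eqP; apply: contra_notT nsep => se.
by apply: (separated_scale se) => x Sx xe; apply: s0 => // /= xe'; rewrite xe' eqxx in xe.
Qed.

Lemma relation_on_setU1 D al x0 : relation_on D al -> S x0 -> ~ D x0 ->
  exists c, relation_on (D `|` [set x0]) (fun x => al x + (if x == x0 then c else 0)).
Proof.
move=> [DS De ale alD al0] Sx0 nDx0.
have offU1 s : vanishes_off (D `|` [set x0]) s <->
    forall x, (S `\` D) x -> x != x0 -> feval s x = 0.
  split => [s0 x [Sx nDx] xx0|s0 x Sx /not_orP[nDx /eqP xx0]]; last exact: s0.
  by apply: s0 => // -[//|/eqP]; rewrite (negbTE xx0).
have off s : vanishes_off (D `|` [set x0]) s -> feval s x0 = 0 -> vanishes_off D s.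
  by move=> s0 sx0 x Sx nDx; have [->//|/eqP xx0] := eqVneq x x0; apply: s0 => // -[].
(* [c] is read off a functional [s0] normalized at [x0]; every functional vanishing
   off [D `|` [set x0]] differs from a multiple of [s0] by one vanishing off [D]. *)
have [c Hc] : exists c, forall s, vanishes_off (D `|` [set x0]) s ->
    dual_pair al s + c * feval s x0 = 0.
  have [[s0 [s0x0 /offU1 s0off]]|nsep] := pselect (separated (S `\` D) x0).
    exists (- dual_pair al s0) => s soff.
    have := al0 (s ++ fscale (- feval s x0) s0); rewrite dual_pair_cat dual_pair_scale.
    rewrite mulNr mulrC mulNr => -> //; apply: off.
      move=> x Sx nDx; rewrite feval_cat feval_scale (soff x) // (s0off x) //.
      by rewrite mulr0 addr0.
    by rewrite feval_cat feval_scale s0x0 mulr1 addrN.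
  exists 0 => s /[dup] soff /offU1 s0; rewrite mul0r addr0; apply/al0/off => //.
  by apply/eqP; apply: contra_notT nsep => sx0; exact: separated_scale sx0 s0.
have ex0 : e != x0 by apply/eqP => ex0; apply: nDx0; rewrite -ex0.
exists c; split.
- by move=> x [/DS|->].
- by left.
- by rewrite /= ale (negbTE ex0) addr0.
- by move=> x; case: (eqVneq x x0) => [->|_]; [right|rewrite addr0 => /alD; left].
- by move=> s soff; rewrite dual_pair_delta ?Hc //; exact: SE.
Qed.

Lemma relation_on_chain (C : set (set (A -> F) * ((A -> F) -> F))) p0 :
  C p0 -> (forall p, C p -> relation_on p.1 p.2) -> total_on C extends ->
  exists2 q, relation_on q.1 q.2 & forall p, C p -> extends p q.
Proof.
move=> Cp0 relC tot.
pose DU := \bigcup_(p in C) p.1.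
pose alU x := if pselect (DU x) is left h then (sval (cid2 h)).2 x else 0.
have alUE p x : C p -> p.1 x -> alU x = p.2 x.
  move=> Cp px; rewrite /alU; case: pselect => [h|[]]; last by exists p.
  case: cid2 => q /= Cq qx.
  by have [[_ pq]|[_ qp]] := tot _ _ Cq Cp; [exact: pq|exact/esym/qp].
have DUS : DU `<=` S by move=> x [p /relC[pS _ _ _ _]]; apply: pS.
exists (DU, alU); last by move=> p Cp; split => x px /=; [exists p|rewrite (alUE p)].
have [_ p0e p0e1 _ _] := relC _ Cp0.
split => //=; first by exists p0.
- by rewrite (alUE p0).
- by move=> x; rewrite /alU; case: pselect => // _; rewrite eqxx.
move=> s soff.
have [k Ck sk] : exists2 k, C k & fsupp s `&` S `<=` k.1.
  apply: (chain_finite_subset (dom := fst) Cp0 _ tot) => [p q []//||x [[_ sx] Sx]].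
    exact: sub_finite_set (finite_fsupp s).
  by apply: contrapT => nDx; move: sx; rewrite soff ?eqxx.
have [kS _ _ kal kvan] := relC _ Ck.
rewrite (_ : dual_pair alU s = dual_pair k.2 s).
  apply: kvan => x Sx nkx; apply/eqP; apply: contra_notT nkx => sx.
  by apply: sk; split => //; split => //; exact: SE.
apply: eq_fsbigr => x /set_mem[Ex sx]; congr (_ * _).
have [Sx|nSx] := pselect (S x); first by apply: alUE => //; apply: sk.
rewrite /alU; case: pselect => [/DUS//|_].
by apply/esym/eqP; apply: contra_notT nSx => /kal/kS.
Qed.

Lemma relation_on_full al : relation_on S al -> forall a, tsum al a = 0.
Proof.
move=> [_ _ _ _ al0] a; have := al0 [:: (a, 1)].
by rewrite dual_pairE big_seq1 mul1r; apply => x Sx /(_ Sx).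
Qed.

Lemma separated_of_independent : independent S -> separated S e.
Proof.
move=> indS; apply: contrapT => nsep.
pose T := {p : set (A -> F) * ((A -> F) -> F) | relation_on p.1 p.2}.
pose R (p q : T) := `[< extends (sval p) (sval q) >].
pose t0 : T := exist _ (_, _) (relation_on_delta nsep).
have [[[D al] /= relD] Dmax] : exists M : T, premaximal R M.
  apply: (ZL_preorder t0).
  - by move=> p; apply/asboolP; split.
  - move=> p q r /asboolP[pq1 pq2] /asboolP[qr1 qr2]; apply/asboolP.
    by split => [x /pq1/qr1//|x px]; rewrite pq2 // qr2 //; exact: pq1.
  move=> C totC; have [[p0 Cp0]|C0] := pselect (exists p, C p); last first.
    by exists t0 => p Cp; case: C0; exists p.
  have [|p [q _ <-]|p q [p' Cp' <-] [q' Cq' <-]|q relq qub] :=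
    @relation_on_chain [set sval p | p in C] (sval p0).
  - by exists p0.
  - exact: (svalP q).
  - by have [/asboolP|/asboolP] := totC _ _ Cp' Cq'; [left|right].
  by exists (exist _ q relq) => p Cp; apply/asboolP; apply: qub; exists p.
have [DS _ ale alD _] := relD.
have SD : S `<=` D.
  move=> x0 Sx0; apply: contrapT => nDx0.
  have [c relc] := relation_on_setU1 relD Sx0 nDx0.
  have ext : R (exist _ (D, al) relD) (exist _ (_, _) relc).
    apply/asboolP; split => [x Dx|x Dx]; first by left.
    by rewrite /= ifF ?addr0 //; apply/eqP => xx0; apply: nDx0; rewrite -xx0.
  by have /asboolP[/= D'D _] := Dmax _ ext; apply: nDx0; apply: D'D; right.
have DeqS : D = S by apply/seteqP.
clear Dmax; rewrite DeqS in relD alD.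
by have := indS al alD (relation_on_full relD) e; rewrite ale => /eqP; rewrite oner_eq0.
Qed.

End Separation.

Lemma feval_patch B J s (l : seq (A -> F)) : J `<=` B ->
  (forall f, (B `\` J) f -> separated B f) ->
  (forall x, (B `\` J) x -> feval s x != 0 -> x \in l) ->
  exists s', (forall x, J x -> feval s' x = feval s x) /\
             (forall x, (B `\` J) x -> feval s' x = 0).
Proof.
move=> JB sepB; elim: l s => [|f l IH] s sl.
  exists s; split => // x BJx; apply/eqP; apply: contraT => sx.
  by have := sl x BJx sx; rewrite in_nil.
have [BJf|nBJf] := pselect ((B `\` J) f); last first.
  apply: IH => x BJx /(sl x BJx); rewrite inE => /orP[/eqP xf|//].
  by case: nBJf; rewrite -xf.
have [w [wf w0]] := sepB f BJf.
have [|s' [s'J s'BJ]] := IH (s ++ fscale (- feval s f) w).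
  move=> x BJx; rewrite feval_cat feval_scale; have [->|xf] := eqVneq x f.
    by rewrite wf mulr1 addrN eqxx.
  by rewrite (w0 x) ?mulr0 ?addr0 //; [move/(sl x BJx); rewrite inE (negbTE xf)|case: BJx].
exists s'; split => // x Jx; rewrite s'J // feval_cat feval_scale (w0 x) ?mulr0 ?addr0 //.
  exact: JB.
by apply/eqP => xf; case: BJf; rewrite -xf.
Qed.

Lemma separated_widen B J e : J `<=` B -> B `<=` E ->
  (forall f, (B `\` J) f -> separated B f) -> J e -> separated J e -> separated B e.
Proof.
move=> JB BE sepB Je [s [se s0]].
have [r sr] := (finite_seqP _).1 (finite_fsupp s).
have sr' x : (B `\` J) x -> feval s x != 0 -> x \in r.
  move=> [Bx _] sx; have : fsupp s x by split => //; exact: BE.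
  by rewrite sr.
have [s' [s'J s'BJ]] := feval_patch JB sepB sr'.
exists s'; split => [|x Bx xe]; first by rewrite s'J.
by have [Jx|nJx] := pselect (J x); [rewrite s'J ?s0|apply: s'BJ].
Qed.

Section MaximalIndependent.
Variables (X : set (A -> F)).
Hypothesis XE : X `<=` E.

(* [X `\` T] spans [X]: no finitary functional separates a point of [T] from it. *)
Definition coindependent (T : set (A -> F)) := forall s,
  (forall x, (X `\` T) x -> feval s x = 0) -> forall x, X x -> feval s x = 0.

Lemma coindependent_bigcup (Fm : set (set (A -> F))) :
  Fm `<=` coindependent -> total_on Fm subset ->
  coindependent (\bigcup_(T in Fm) T).
Proof.
move=> Fco tot s s0 x Xx.
have [[T1 FT1]|nF] := pselect (exists T, Fm T); last first.
  by apply: s0; split => // -[T FT _]; apply: nF; exists T.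
have [k Fk sk] : exists2 k, Fm k & fsupp s `&` X `<=` k.
  apply: (chain_finite_subset (dom := id) FT1 _ tot) => // [|y [[_ sy] Xy]].
    exact: sub_finite_set (finite_fsupp s).
  by apply: contrapT => nU; move: sy; rewrite s0 ?eqxx.
apply: (Fco k Fk) => // y [Xy nky]; apply/eqP; apply: contra_notT nky => sy.
by apply: sk; split => //; split => //; exact: XE.
Qed.

Lemma separated_maximal_coindependent J T e :
  T `<=` X `\` J -> coindependent T ->
  (forall B, T `<` B -> ~ (B `<=` X `\` J /\ coindependent B)) ->
  (X `\` J) e -> ~ T e -> separated (X `\` T) e.
Proof.
move=> TXJ coT Tmax [Xe nJe] nTe.
have : ~ coindependent (T `|` [set e]).
  move=> coTe; apply: (Tmax (T `|` [set e])).
    by split => [y Ty|/(_ e (or_intror erefl))//]; left.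
  by split => // y [/TXJ//|->].
move=> /existsNP[s /not_implyP[s0 /existsNP[x /not_implyP[Xx /eqP sx]]]].
have s0' y : (X `\` T) y -> y != e -> feval s y = 0.
  by move=> [Xy nTy] ye; apply: s0; split => // -[//|/eqP]; rewrite (negbTE ye).
have se : feval s e != 0.
  apply: contra_neq sx => se0; apply: coT => // y XTy.
  by have [->//|ye] := eqVneq y e; exact: s0'.
exact: separated_scale se s0'.
Qed.

Lemma independent_maximal_between J : J `<=` X -> independent J ->
  exists M, maximal_in [set B | (B `<=` E /\ independent B) /\ J `<=` B /\ B `<=` X] M.
Proof.
move=> JX indJ.
have [|T [[TXJ coT] Tmax]] :=
  Zorn_bigcup (P := [set T | T `<=` X `\` J /\ coindependent T]).
  move=> Fm FP tot; split; first by move=> x [T /FP[/(_ x) TXJ _] Tx]; exact: TXJ.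
  by apply: coindependent_bigcup tot => T /FP[].
have JB : J `<=` X `\` T by move=> x Jx; split; [exact: JX|move=> /TXJ[]].
have BE : X `\` T `<=` E by move=> x [/XE].
have sepB e : (X `\` T) e -> separated (X `\` T) e.
  move=> [Xe nTe]; have sepXJ := separated_maximal_coindependent TXJ coT Tmax.
  have [Je|nJe] := pselect (J e); last exact: sepXJ.
  apply: (separated_widen JB BE) => // [f [[Xf nTf] nJf]|]; first exact: sepXJ.
  exact: separated_of_independent (subset_trans JX XE) Je indJ.
exists (X `\` T); split.
  by split; [split; [|exact: independent_of_separated]|split => // x []].
move=> N [[NE indN] [_ NX]] BN; apply/seteqP; split => // x Nx; split; first exact: NX.
move=> Tx; have [s [sx s0]] := separated_of_independent NE Nx indN.
suff : feval s x = 0 by rewrite sx => /eqP; rewrite oner_eq0.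
apply: coT (NX x Nx) => y [Xy nTy]; apply: s0; first exact: BN.
by apply/eqP => yx; apply: nTy; rewrite yx.
Qed.

End MaximalIndependent.

Lemma independent_augment J J' : J `<=` E -> independent J ->
  ~ maximal_in [set I | I `<=` E /\ independent I] J ->
  maximal_in [set I | I `<=` E /\ independent I] J' ->
  exists2 x, (J' `\` J) x & J `|` [set x] `<=` E /\ independent (J `|` [set x]).
Proof.
move=> JE indJ nmaxJ [[J'E indJ'] maxJ'].
have [N [y [[NE indN] JN Ny nJy]]] := not_maximal_inP (conj JE indJ) nmaxJ.
have indJy : independent (J `|` [set y]).
  by apply: (independent_sub indN) => x [/JN|->].
apply: contrapT => noaug.
have depJx x : J' x -> ~ J x -> ~ independent (J `|` [set x]).
  move=> J'x nJx indJx; apply: noaug; exists x => //.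
  by split => // z [/JE|->]; last exact: J'E.
have nJ'y : ~ J' y by move=> J'y; exact: depJx J'y nJy indJy.
have [s [sy s0]] : separated (J `|` [set y]) y.
  by apply: separated_of_independent indJy => [x [/JE|->]|]; [|exact: NE|right].
have sJ x : J x -> feval s x = 0.
  by move=> Jx; apply: s0; [left|apply/eqP => xy; apply: nJy; rewrite -xy].
(* Every [x] of [J'] lies in the span of [J], on which [s] vanishes. *)
have sJ' x : J' x -> feval s x = 0.
  move=> J'x; have [/sJ//|nJx] := pselect (J x).
  exact: feval_dependent_eq0 (J'E x J'x) indJ (depJx x J'x nJx) sJ.
have /not_independentP[al [alJ'y al0 [x0 alx0]]] : ~ independent (J' `|` [set y]).
  move=> indJ'y; apply: nJ'y; rewrite -(maxJ' (J' `|` [set y])).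
  - by right.
  - by split => // x [/J'E//|->]; exact: NE.
  - by move=> x; left.
have aly : al y = 0.
  have := dual_pair_eq0 s al0; rewrite (dual_pair_supp1 (NE y Ny)).
    by rewrite sy mulr1.
  move=> x _ xy; have [->|/alJ'y[/sJ'->|/= xy']] := eqVneq (al x) 0.
  - by rewrite mul0r.
  - by rewrite mulr0.
  - by rewrite xy' eqxx in xy.
move/eqP: alx0; apply; apply: indJ' al0 x0 => x alx.
by case: (alJ'y x alx) => // /= xy; rewrite xy aly eqxx in alx.
Qed.

End ThinSums.

Theorem theorem6p1 (F : fieldType) (A : Type) (E : set (A -> F)) :
  thin E ->
  matroid E [set I | I `<=` E /\ thinly_independent I].
Proof.
move=> thinE.
have -> : [set I | I `<=` E /\ thinly_independent I] =
          [set I | I `<=` E /\ independent E I].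
  by apply/seteqP; split => I [IE indI]; split => //; apply/(thinly_independentE thinE IE).
split.
- by move=> J [].
- by split => //; exact: independent0.
- move=> J J' [JE indJ] J'J.
  by split; [exact: subset_trans J'J JE|exact: independent_sub indJ J'J].
- by move=> J J' [JE indJ] nmaxJ maxJ'; exact: independent_augment.
- by move=> J X JX XE [_ indJ]; exact: independent_maximal_between.
Qed.
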